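(* Let $\mathcal S=(s_\alpha)_{\alpha\in L(\omega_1)}$ be a ladder system on $\omega_1$ and let $K_{\mathcal S}=\omega_1\cup\{\infty\}$ be the associated ladder system space. Let $\phi:K_{\mathcal S}\to K_{\mathcal S}$ be a continuous map with $\phi(\infty)=\infty$. Then there exists a closed unbounded set $F\subset\omega_1$ such that for every $\alpha\in F$, either $\phi(\alpha)=\alpha$ or $\phi(\alpha)=\infty$.
   Context: $L(\omega_1)$ denotes the set of limit ordinals in $\omega_1$ (the first uncountable ordinal) and $S(\omega_1)=\omega_1\setminus L(\omega_1)$. A ladder system on $\omega_1$ is a family $\mathcal S=(s_\alpha)_{\alpha\in L(\omega_1)}$ where for each limit $\alpha$, $s_\alpha=\{s^n_\alpha:n\in\omega\}$ and $(s^n_\alpha)_{n\in\omega}$ is a strictly increasing sequence in $S(\omega_1)$ converging (in the order sense) to $\alpha$. The ladder system topology $\tau_{\mathcal S}$ on $\omega_1$ is the topology in which every element of $S(\omega_1)$ is isolated and the basic neighborhoods of a limit ordinal $\alpha$ are the sets $\{\alpha\}\cup B$ with $B$ a cofinite subset of $s_\alpha$. This is a locally compact Hausdorff space, and $K_{\mathcal S}=\omega_1\cup\{\infty\}$ is its one-point compactification. ''Club'' means closed (in the order topology) and unbounded in $\omega_1$. *)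

(* omega_1 is given abstractly as any strictly well-ordered type
   that is uncountable and all of whose proper initial segments are countable;
   this characterizes omega_1 up to order isomorphism. *)
From Stdlib Require Import Arith List.

Record omega1_order (T : Type) (lt : T -> T -> Prop) : Prop := {
  o1_irrefl : forall x, ~ lt x x;
  o1_trans : forall x y z, lt x y -> lt y z -> lt x z;
  o1_total : forall x y, lt x y \/ x = y \/ lt y x;
  o1_wf : well_founded lt;
  o1_uncountable : ~ exists f : T -> nat, forall x y, f x = f y -> x = y;
  o1_segments_countable : forall a, exists f : T -> nat,
      forall x y, lt x a -> lt y a -> f x = f y -> x = y
}.

Section Ladder.
Variables (T : Type) (lt : T -> T -> Prop).

Definition le (x y : T) : Prop := lt x y \/ x = y.

Definition is_limit (a : T) : Prop :=
  (exists b, lt b a) /\ forall b, lt b a -> exists c, lt b c /\ lt c a.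

Definition ladder_system (s : T -> nat -> T) : Prop :=
  forall a, is_limit a ->
    (forall n, lt (s a n) (s a (S n))) /\
    (forall n, ~ is_limit (s a n)) /\
    (forall n, lt (s a n) a) /\
    (forall b, lt b a -> exists n, lt b (s a n)).

Variable s : T -> nat -> T.

(* open sets of the ladder system topology tau_S on T: every limit point of U
   has a basic neighbourhood {a} u B in U, B cofinite in s_a (s_a is
   strictly increasing, so B cofinite in s_a = all but finitely many terms) *)
Definition ladder_open (U : T -> Prop) : Prop :=
  forall a, U a -> is_limit a ->
    exists N, forall n, N <= n -> U (s a n).

Definition ladder_closed (C : T -> Prop) : Prop :=
  ladder_open (fun x => ~ C x).

Definition ladder_compact (C : T -> Prop) : Prop :=
  forall (I : Type) (V : I -> T -> Prop),
    (forall i, ladder_open (V i)) ->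
    (forall x, C x -> exists i, V i x) ->
    exists l : list I, forall x, C x -> exists i, In i l /\ V i x.

(* K_S = T + {oo}, with None = oo; open sets of the one-point
   compactification *)
Definition K_open (W : option T -> Prop) : Prop :=
  ladder_open (fun x => W (Some x)) /\
  (W None -> ladder_closed (fun x => ~ W (Some x)) /\
             ladder_compact (fun x => ~ W (Some x))).

Definition K_continuous (phi : option T -> option T) : Prop :=
  forall W, K_open W -> K_open (fun x => W (phi x)).

Definition order_closed (F : T -> Prop) : Prop :=
  forall a, is_limit a ->
    (forall b, lt b a -> exists c, F c /\ lt b c /\ lt c a) -> F a.

Definition unbounded (F : T -> Prop) : Prop :=
  forall b, exists c, F c /\ le b c.

Definition club (F : T -> Prop) : Prop := order_closed F /\ unbounded F.

End Ladder.

(* Points of K_S are closed and the fibres phi^-1(b) avoid a neighbourhood of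
   oo, so each fibre is compact in omega_1, hence bounded.  Let g(x) bound both
   phi(x) and the fibre of x; the limits a closed under g form a club.  For such
   an a, phi(a) < a would put a in a fibre bounded below a, while a < phi(a) is
   impossible by continuity: the points s_a(n) < a, which phi sends below a,
   converge to a, but {phi(a)} together with the part of s_phi(a) above a is a
   neighbourhood of phi(a) lying above a. *)
From Stdlib Require Import Arith List.
From Stdlib Require Import ClassicalEpsilon Cantor.

Section Omega1.
Variables (T : Type) (lt : T -> T -> Prop).
Hypothesis Ho : omega1_order T lt.

Let lt_irrefl := o1_irrefl T lt Ho.
Let lt_trans := o1_trans T lt Ho.

Lemma le_lt_trans x y z : le T lt x y -> lt y z -> lt x z.
Proof. intros [Hxy|<-] Hyz; [exact (lt_trans _ _ _ Hxy Hyz) | exact Hyz]. Qed.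

Lemma lt_le_trans x y z : lt x y -> le T lt y z -> lt x z.
Proof. intros Hxy [Hyz|<-]; [exact (lt_trans _ _ _ Hxy Hyz) | exact Hxy]. Qed.

Lemma not_lt_le x y : ~ lt x y -> le T lt y x.
Proof.
  intros Hxy. destruct (o1_total T lt Ho x y) as [H|[->|H]].
  - contradiction.
  - right; reflexivity.
  - left; exact H.
Qed.

Lemma upper_bound2 x y : exists m, le T lt x m /\ le T lt y m.
Proof.
  destruct (o1_total T lt Ho x y) as [H|[<-|H]].
  - exists y; split; [left | right]; auto.
  - exists x; split; right; reflexivity.
  - exists x; split; [right | left]; auto.
Qed.

Lemma omega1_inhabited : inhabited T.
Proof.
  apply NNPP; intros Hempty. apply (o1_uncountable T lt Ho).
  exists (fun _ => 0). intros x. exfalso. exact (Hempty (inhabits x)).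
Qed.

(* Otherwise T would be the countable segment below b plus the point b. *)
Lemma exists_gt b : exists c, lt b c.
Proof.
  apply NNPP; intros Hmax.
  assert (Hbelow : forall x, x <> b -> lt x b).
  { intros x Hxb. destruct (o1_total T lt Ho x b) as [H|[H|H]];
      [exact H | contradiction | exfalso; eauto]. }
  destruct (o1_segments_countable T lt Ho b) as [f Hf].
  apply (o1_uncountable T lt Ho).
  exists (fun x => if excluded_middle_informative (x = b) then 0 else S (f x)).
  intros x y.
  destruct (excluded_middle_informative (x = b)) as [->|Hx],
           (excluded_middle_informative (y = b)) as [->|Hy]; try discriminate; [reflexivity|].
  intros [= Hfxy]. exact (Hf x y (Hbelow x Hx) (Hbelow y Hy) Hfxy).
Qed.

(* If the family were unbounded, each e would lie below some h(i) in a
   countable segment, and e |-> (index of i, code of e in that segment) would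
   inject T into nat. *)
Lemma countable_family_bounded (I : Type) (P : I -> Prop) (code : I -> nat)
  (Hcode : forall i j, P i -> P j -> code i = code j -> i = j) (h : I -> T) :
  exists e, forall i, P i -> lt (h i) e.
Proof.
  apply NNPP; intros Hunb.
  assert (Hwit : forall e, exists i, P i /\ le T lt e (h i)).
  { intros e. apply NNPP; intros Hno. apply Hunb. exists e. intros i Pi.
    apply NNPP; intros Hnlt. apply Hno. exists i. split; [exact Pi|].
    apply not_lt_le; exact Hnlt. }
  destruct (choice _ Hwit) as [ie Hie].
  assert (Hseg : forall i, exists k : T -> nat,
      forall x y, le T lt x (h i) -> le T lt y (h i) -> k x = k y -> x = y).
  { intros i. destruct (exists_gt (h i)) as [d Hd].
    destruct (o1_segments_countable T lt Ho d) as [k Hk].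
    exists k. intros x y Hx Hy. apply Hk; eapply le_lt_trans; eauto. }
  destruct (choice _ Hseg) as [K HK].
  apply (o1_uncountable T lt Ho).
  exists (fun e => to_nat (code (ie e), K (ie e) e)).
  intros x y Hxy. apply (f_equal of_nat) in Hxy. rewrite !cancel_of_to in Hxy.
  injection Hxy; intros HK_eq Hcode_eq.
  destruct (Hie x) as [Px Hx], (Hie y) as [Py Hy].
  assert (Hi : ie x = ie y) by (apply Hcode; assumption).
  rewrite Hi in HK_eq, Hx. exact (HK (ie y) x y Hx Hy HK_eq).
Qed.

Lemma least_element (P : T -> Prop) x :
  P x -> exists m, P m /\ forall y, P y -> le T lt m y.
Proof.
  induction x as [x IH] using (well_founded_ind (o1_wf T lt Ho)); intros Px.
  destruct (classic (exists y, P y /\ lt y x)) as [[y [Py Hyx]]|Hmin].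
  - exact (IH y Hyx Py).
  - exists x. split; [exact Px|]. intros y Py. apply not_lt_le.
    intros Hyx. apply Hmin. eauto.
Qed.

Lemma list_upper_bound (l : list T) : exists e, forall x, In x l -> le T lt x e.
Proof.
  induction l as [|x l [e He]].
  - destruct omega1_inhabited as [t]. exists t. intros x [].
  - destruct (upper_bound2 x e) as [m [Hxm Hem]]. exists m. intros y [<-|Hy].
    + exact Hxm.
    + destruct (He y Hy) as [Hye|<-]; [left; eapply lt_le_trans; eauto | exact Hem].
Qed.

Lemma increasing_le (u : nat -> T) :
  (forall n, lt (u n) (u (S n))) -> forall n m, n <= m -> le T lt (u n) (u m).
Proof.
  intros Hu n m. induction 1 as [|m _ IH].
  - right; reflexivity.
  - left. exact (le_lt_trans _ _ _ IH (Hu m)).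
Qed.

Lemma sequence_sup (u : nat -> T) :
  exists c, (forall n, lt (u n) c) /\ forall y, lt y c -> exists n, le T lt y (u n).
Proof.
  destruct (countable_family_bounded nat (fun _ => True) (fun n => n))
    with (h := u) as [e He]; [auto|].
  destruct (least_element (fun c => forall n, lt (u n) c) e) as [c [Hc Hmin]];
    [intros n; exact (He n I)|].
  exists c. split; [exact Hc|]. intros y Hyc. apply NNPP; intros Hy.
  assert (Hbelow : forall n, lt (u n) y).
  { intros n. destruct (o1_total T lt Ho (u n) y) as [H|[H|H]];
      [exact H | exfalso; apply Hy; exists n; right; auto
      | exfalso; apply Hy; exists n; left; exact H]. }
  exact (lt_irrefl c (le_lt_trans _ _ _ (Hmin y Hbelow) Hyc)).
Qed.

Definition closed_under (g : T -> T) (a : T) : Prop :=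
  is_limit T lt a /\ forall x, lt x a -> lt (g x) a.

Lemma closure_step (g : T -> T) d :
  exists e, lt d e /\ forall z, le T lt z d -> lt (g z) e.
Proof.
  destruct (exists_gt d) as [d' Hd'].
  destruct (o1_segments_countable T lt Ho d') as [f Hf].
  destruct (countable_family_bounded T (fun z => le T lt z d) f) with (h := g)
    as [e1 He1].
  { intros x y Hx Hy. apply Hf; eapply le_lt_trans; eauto. }
  destruct (upper_bound2 e1 d) as [m [He1m Hdm]].
  destruct (exists_gt m) as [e He].
  exists e. split.
  - exact (le_lt_trans _ _ _ Hdm He).
  - intros z Hz. exact (lt_trans _ _ _ (He1 z Hz) (le_lt_trans _ _ _ He1m He)).
Qed.

(* The closure of b is the supremum of b, next b, next (next b), ... *)
Lemma club_closed_under (g : T -> T) : club T lt (closed_under g).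
Proof.
  split.
  - intros a Ha Hcof. split; [exact Ha|]. intros x Hx.
    destruct (Hcof x Hx) as [c [[_ Hc] [Hxc Hca]]].
    exact (lt_trans _ _ _ (Hc x Hxc) Hca).
  - intros b. destruct (choice _ (closure_step g)) as [next Hnext].
    set (u := fun n => Nat.iter n next b).
    assert (Hu : forall n, lt (u n) (u (S n))) by (intros n; apply Hnext).
    destruct (sequence_sup u) as [c [Hc Hsup]].
    exists c. split; [split; [split|] | left; exact (Hc 0)].
    + exists (u 0). exact (Hc 0).
    + intros y Hy. destruct (Hsup y Hy) as [n Hn].
      exists (u (S n)). split; [exact (le_lt_trans _ _ _ Hn (Hu n)) | exact (Hc (S n))].
    + intros x Hx. destruct (Hsup x Hx) as [n Hn].
      exact (lt_trans _ _ _ (proj2 (Hnext (u n)) x Hn) (Hc (S n))).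
Qed.

Section Ladder.
Variable s : T -> nat -> T.
Hypothesis Hs : ladder_system T lt s.

Lemma ladder_compact_bounded C :
  ladder_compact T lt s C -> exists e, forall x, C x -> lt x e.
Proof.
  intros HC.
  destruct (HC T (fun b x => lt x b)) as [l Hl].
  - intros b a Hab Ha. exists 0. intros n _.
    destruct (Hs a Ha) as [_ [_ [Hsa _]]]. exact (lt_trans _ _ _ (Hsa n) Hab).
  - intros x _. exact (exists_gt x).
  - destruct (list_upper_bound l) as [e He]. exists e. intros x Cx.
    destruct (Hl x Cx) as [b [Hb Hxb]]. exact (lt_le_trans _ _ _ Hxb (He b Hb)).
Qed.

Lemma ladder_eventually_neq a g :
  is_limit T lt a -> a <> g -> exists N, forall n, N <= n -> s a n <> g.
Proof.
  intros Ha Hag. destruct (Hs a Ha) as [Hinc [_ [Hsa Hcof]]].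
  destruct (classic (lt g a)) as [Hga|Hga].
  - destruct (Hcof g Hga) as [N HN]. exists N. intros n Hn <-.
    exact (lt_irrefl _ (lt_le_trans _ _ _ HN (increasing_le _ Hinc N n Hn))).
  - exists 0. intros n _ <-. exact (Hga (Hsa n)).
Qed.

Lemma K_open_neq_point g : K_open T lt s (fun y => y <> Some g).
Proof.
  assert (Hopen : forall U : T -> Prop, (forall x, U x <-> x <> g) ->
            ladder_open T lt s U).
  { intros U HU a Ua Ha.
    destruct (ladder_eventually_neq a g Ha (proj1 (HU a) Ua)) as [N HN].
    exists N. intros n Hn. apply HU. exact (HN n Hn). }
  split.
  - apply Hopen. intros x. split; [congruence | intros Hx [= ->]; exact (Hx eq_refl)].
  - intros _. split.
    + apply Hopen. intros x. split.
      * intros Hx ->. exact (Hx (fun H => H eq_refl)).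
      * intros Hx Hxg. apply Hxg. congruence.
    + intros I V _ Hcov. destruct (Hcov g) as [i Hi]; [intros H; exact (H eq_refl)|].
      exists (i :: nil). intros x Hx.
      assert (Hxg : x = g) by (apply NNPP; intros Hxg; apply Hx; congruence).
      subst x. exists i. split; [left; reflexivity | exact Hi].
Qed.

Definition ladder_tail_above (a b : T) (z : T) : Prop :=
  lt a z /\ (z = b \/ (is_limit T lt b /\ exists n, z = s b n)).

Lemma ladder_open_tail_above a b : lt a b -> ladder_open T lt s (ladder_tail_above a b).
Proof.
  intros Hab x [_ [->|[Hb [n ->]]]] Hx.
  - destruct (Hs b Hx) as [Hinc [_ [_ Hcof]]]. destruct (Hcof a Hab) as [N HN].
    exists N. intros n Hn. split.
    + exact (lt_le_trans _ _ _ HN (increasing_le _ Hinc N n Hn)).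
    + right. split; [exact Hx | exists n; reflexivity].
  - exfalso. exact (proj1 (proj2 (Hs b Hb)) n Hx).
Qed.

Section Continuous.
Variable phi : option T -> option T.
Hypothesis Hphi : K_continuous T lt s phi.
Hypothesis Hinf : phi None = None.

(* The preimage of the open set K \ {g} contains oo, so its complement is compact. *)
Lemma continuous_fiber_bounded g :
  exists e, forall z, phi (Some z) = Some g -> lt z e.
Proof.
  destruct (Hphi _ (K_open_neq_point g)) as [_ Hnbhd].
  destruct (Hnbhd ltac:(rewrite Hinf; discriminate)) as [_ Hcompact].
  destruct (ladder_compact_bounded _ Hcompact) as [e He].
  exists e. intros z Hz. apply He. intros H. exact (H Hz).
Qed.

Lemma continuous_local_bound x : exists e,
  (forall y, phi (Some x) = Some y -> lt y e) /\
  (forall z, phi (Some z) = Some x -> lt z e).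
Proof.
  destruct (continuous_fiber_bounded x) as [e1 He1].
  destruct (phi (Some x)) as [y|].
  - destruct (exists_gt y) as [e2 He2]. destruct (upper_bound2 e1 e2) as [m [H1 H2]].
    exists m. split.
    + intros y' [= <-]. exact (lt_le_trans _ _ _ He2 H2).
    + intros z Hz. exact (lt_le_trans _ _ _ (He1 z Hz) H1).
  - exists e1. split; [discriminate | exact He1].
Qed.

Lemma continuous_limit_above a b :
  is_limit T lt a -> phi (Some a) = Some b -> lt a b ->
  exists n z, phi (Some (s a n)) = Some z /\ lt a z.
Proof.
  intros Ha Hphia Hab.
  set (W := fun y => match y with Some z => ladder_tail_above a b z | None => False end).
  assert (HW : K_open T lt s W).
  { split; [exact (ladder_open_tail_above a b Hab) | intros []]. }
  destruct (proj1 (Hphi W HW) a) as [N HN]; [cbn; rewrite Hphia | exact Ha |].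
  { split; [exact Hab | left; reflexivity]. }
  exists N. specialize (HN N (le_n N)). cbn in HN.
  destruct (phi (Some (s a N))) as [z|]; [| contradiction].
  exists z. split; [reflexivity | exact (proj1 HN)].
Qed.

End Continuous.
End Ladder.
End Omega1.

Theorem proposition1 (T : Type) (lt : T -> T -> Prop)
  (Ho : omega1_order T lt) (s : T -> nat -> T)
  (Hs : ladder_system T lt s) (phi : option T -> option T)
  (Hphi : K_continuous T lt s phi) (Hinf : phi None = None) :
  exists F : T -> Prop, club T lt F /\
    forall a, F a -> phi (Some a) = Some a \/ phi (Some a) = None.
Proof.
  destruct (choice _ (continuous_local_bound T lt Ho s Hs phi Hphi Hinf))
    as [g Hg].
  exists (closed_under T lt g). split; [exact (club_closed_under T lt Ho g)|].
  intros a [Ha Hclosed].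
  destruct (phi (Some a)) as [b|] eqn:Hphia; [left | right; reflexivity].
  destruct (o1_total T lt Ho b a) as [Hba|[->|Hab]]; [exfalso | reflexivity | exfalso].
  - apply (o1_irrefl T lt Ho a).
    exact (o1_trans T lt Ho _ _ _ (proj2 (Hg b) a Hphia) (Hclosed b Hba)).
  - destruct (continuous_limit_above T lt Ho s Hs phi Hphi a b Ha Hphia Hab)
      as [n [z [Hz Haz]]].
    assert (Hsn : lt (s a n) a) by apply (Hs a Ha).
    apply (o1_irrefl T lt Ho a).
    exact (o1_trans T lt Ho _ _ _ Haz
             (o1_trans T lt Ho _ _ _ (proj1 (Hg (s a n)) z Hz) (Hclosed _ Hsn))).
Qed.
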